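(* In the setting below, the image of $\bar\rho\colon\bar G\to\bar A$ is a normal subgroup of $\bar A$.
   Context: Let $G$ be a group generated by $a_1,\dots,a_n$ with $z=a_1\cdots a_n$ central. Let $S_1,\dots,S_m\subseteq\{1,\dots,n\}$ with $|S_i\cap S_r|\le1$ for $i\neq r$. For $S\subseteq\{1,\dots,n\}$ let $G_S$ be the quotient of $G$ by the normal closure of $\{a_j:j\notin S\}$; let $a_{ij}$ be the image of $a_j$ in $G_{S_i}$ and $z_i=a_{i1}\cdots a_{in}$ (central in $G_{S_i}$). Let $\bar G=G/\langle z\rangle$, $\bar G_{S_i}=G_{S_i}/\langle z_i\rangle$, and assume each $\bar G_{S_i}$ is free of rank $|S_i|-1$, the images of any $|S_i|-1$ of the $a_{ij}$, $j\in S_i$, forming a free basis. Let $\bar A=\prod_{i=1}^m\bar G_{S_i}$ and $\bar\rho\colon\bar G\to\bar A$ the homomorphism induced by the product of the projections $G\to G_{S_i}$. *)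

From mathcomp Require Import all_boot.
Set Implicit Arguments. Unset Strict Implicit. Unset Printing Implicit Defensive.

Record grp := Grp {
  car :> Type;
  gmul : car -> car -> car;
  gone : car;
  ginv : car -> car;
  gmulA : forall x y z, gmul x (gmul y z) = gmul (gmul x y) z;
  gmul1 : forall x, gmul gone x = x;
  gmulV : forall x, gmul (ginv x) x = gone }.

Arguments gmul {g}. Arguments gone {g}. Arguments ginv {g}.

Section Grp.
Variable G : grp.

Definition is_subgroup (P : G -> Prop) : Prop :=
  P gone /\ (forall x y, P x -> P y -> P (gmul x y)) /\ (forall x, P x -> P (ginv x)).

Definition is_normal (P : G -> Prop) : Prop :=
  is_subgroup P /\ (forall x g, P x -> P (gmul (gmul (ginv g) x) g)).

Definition gen_subgroup (X : G -> Prop) : G -> Prop :=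
  fun g => forall P, is_subgroup P -> (forall x, X x -> P x) -> P g.

Definition normal_closure (X : G -> Prop) : G -> Prop :=
  fun g => forall P, is_normal P -> (forall x, X x -> P x) -> P g.

Definition prodl (n : nat) (a : 'I_n -> G) : G :=
  foldr (fun i acc => gmul (a i) acc) gone (enum 'I_n).

(* The free basis property of a family b in the quotient group G / M
   (M a normal subgroup): universal property, stated through
   homomorphisms of G killing M (= homomorphisms out of G / M), with
   uniqueness as maps on G / M. *)
Definition free_basis_mod (M : G -> Prop) (I : Type) (b : I -> G) : Prop :=
  forall (H : grp) (f : I -> H), exists phi : G -> H,
    [/\ (forall x y, phi (gmul x y) = gmul (phi x) (phi y)),
        (forall x, M x -> phi x = gone),
        (forall i, phi (b i) = f i) &
        (forall psi : G -> H,
           (forall x y, psi (gmul x y) = gmul (psi x) (psi y)) ->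
           (forall x, M x -> psi x = gone) ->
           (forall i, psi (b i) = f i) ->
           forall x, psi x = phi x)].

End Grp.

(* Kernel of G -> G_S : normal closure of {a_j : j \notin S}. *)
Definition kerS (G : grp) (n : nat) (a : 'I_n -> G) (S : {set 'I_n}) : G -> Prop :=
  normal_closure (fun x => exists j, j \notin S /\ x = a j).

(* Kernel of G -> Gbar_S = G_S / <z_S> : preimage of <z_S>, i.e. the
   elements g with g * c^-1 in kerS for some c in <z>, z = a_1 ... a_n
   (z_S is the image of z). *)
Definition kerSbar (G : grp) (n : nat) (a : 'I_n -> G) (S : {set 'I_n}) : G -> Prop :=
  fun g => exists c, gen_subgroup (fun x => x = prodl a) c /\
                     kerS a S (gmul g (ginv c)).

From mathcomp Require Import all_boot.
From Stdlib Require Import FunctionalExtensionality.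

(* The tuples [h] conjugating the diagonal image of [G] into itself are closed
   under pointwise products, and every tuple is a product of tuples supported
   on one coordinate; on a single coordinate [i], closure under products
   reduces further to conjugation by a generator [y = a j] or its inverse.
   As [G] is generated by the [a k], it remains to conjugate [a k] by [y] in
   the [i]th factor only.  If [j] and [k] are distinct elements of [S i], then
   since [|S i :&: S r| <= 1] every other factor [G_(S r)] kills [a j] or
   [a k], so the resulting tuple is the image of [y^-1 a k y]; otherwise the
   conjugation is already trivial in [G_(S i)], and the tuple is the image of
   [a k].  Centrality of [z] only serves to make the kernels normal. *)

Section GroupFacts.
Context {G : grp}.
Implicit Types x y z g : G.
Local Notation "x * y" := (gmul x y).
Local Notation "x ^-1" := (ginv x).
Local Notation "1" := (@gone G).

Lemma gmulVr x : x * x^-1 = 1.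
Proof.
rewrite -{1}(gmul1 (x * x^-1)) -{1}(gmulV x^-1) -gmulA (gmulA x^-1 x) gmulV gmul1.
by rewrite gmulV.
Qed.

Lemma gmulr1 x : x * 1 = x.
Proof. by rewrite -(gmulV x) gmulA gmulVr gmul1. Qed.

Lemma ginvK x : x^-1^-1 = x.
Proof. by rewrite -(gmulr1 (x^-1^-1)) -(gmulV x) gmulA gmulV gmul1. Qed.

Lemma ginv1 : (1 : G)^-1 = 1.
Proof. by rewrite -{2}(gmulV 1) gmulr1. Qed.

Lemma ginvM x y : (x * y)^-1 = y^-1 * x^-1.
Proof.
have inv_uniq u v : u * v = 1 -> v^-1 = u.
  by move=> uv; rewrite -(gmul1 v^-1) -uv -gmulA gmulVr gmulr1.
by apply: inv_uniq; rewrite -gmulA (gmulA x^-1) gmulV gmul1 gmulV.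
Qed.

Lemma gen_subgroup_ind (X P : G -> Prop) :
  is_subgroup P -> (forall x, X x -> P x) -> forall g, gen_subgroup X g -> P g.
Proof. by move=> subP XP g; apply. Qed.

Lemma gen_subgroup_is_subgroup (X : G -> Prop) : is_subgroup (gen_subgroup X).
Proof.
split; [|split] => [P [] //|x y Xx Xy P subP XP|x Xx P subP XP];
  have [_ [mulP invP]] := subP; [apply: mulP|apply: invP];
  by [apply: Xx|apply: Xy].
Qed.

Lemma gen_subgroup_monoid_ind (X P : G -> Prop) :
  P 1 -> (forall x y, P x -> P y -> P (x * y)) ->
  (forall x, X x -> P x /\ P x^-1) -> forall g, gen_subgroup X g -> P g.
Proof.
move=> P1 PM XP g Xg; suff [] : P g /\ P g^-1 by [].
apply: (@gen_subgroup_ind X (fun x => P x /\ P x^-1)) Xg => //.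
split; [|split] => [|x y [Px Px'] [Py Py']|x [Px Px']].
- by rewrite ginv1.
- by rewrite ginvM; split; apply: PM.
- by rewrite ginvK.
Qed.

Lemma normal_closure_normal (X : G -> Prop) : is_normal (normal_closure X).
Proof.
split; [split; [|split]|] => [P [[]] //|x y Xx Xy P normP XP|x Xx P normP XP|x g Xx P normP XP];
  have [[_ [mulP invP]] conjP] := normP;
  by [apply: mulP; [apply: Xx|apply: Xy]|apply: invP; apply: Xx|apply: conjP; apply: Xx].
Qed.

Definition central z := forall g, z * g = g * z.

Lemma central_is_subgroup : is_subgroup central.
Proof.
split; [|split] => [g|z z' cz cz' g|z cz g]; first by rewrite gmul1 gmulr1.
  by rewrite -gmulA cz' gmulA cz gmulA.
by rewrite -{1}(gmulr1 g) -(gmulVr z) (gmulA g) -cz -!gmulA (gmulA z^-1) gmulV gmul1.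
Qed.

Lemma normal_mul_central (K Z : G -> Prop) :
  is_normal K -> is_subgroup Z -> (forall z, Z z -> central z) ->
  is_normal (fun g => exists z, Z z /\ K (g * z^-1)).
Proof.
move=> [[K1 [KM KV]] KJ] [Z1 [ZM ZV]] Zc.
have Zc' z : Z z -> central z^-1 by move=> /ZV; apply: Zc.
split; [split; [|split]|].
- by exists 1; rewrite ginv1 gmulr1.
- move=> x y [z [Zz Kx]] [z' [Zz' Ky]]; exists (z * z'); split; first exact: ZM.
  have := KM _ _ Kx Ky.
  by rewrite ginvM !gmulA -(gmulA x) (Zc' z Zz y) !gmulA -(gmulA _ z^-1) (Zc' z Zz) !gmulA.
- move=> x [z [Zz Kx]]; exists z^-1; split; first exact: ZV.
  by have := KV _ Kx; rewrite ginvM ginvK Zc.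
- move=> x g [z [Zz Kx]]; exists z; split=> //.
  by have := KJ _ g Kx; rewrite -!gmulA (Zc' z Zz).
Qed.

Definition congr_mod (N : G -> Prop) x y := N (x * y^-1).

Section CongruenceModNormal.
Context {N : G -> Prop} (N_normal : is_normal N).
Local Notation "x == y" := (congr_mod N x y).

Lemma congr_mod_refl x : x == x.
Proof. by have [[N1 _] _] := N_normal; rewrite /congr_mod gmulVr. Qed.

Lemma congr_mod_mul x x' y y' : x == x' -> y == y' -> x * y == x' * y'.
Proof.
have [[_ [NM _]] NJ] := N_normal.
move=> exx' /(NJ _ x^-1); rewrite ginvK /congr_mod ginvM => eyy'.
by have := NM _ _ eyy' exx'; rewrite -!gmulA (gmulA x^-1) gmulV gmul1 !gmulA.
Qed.

Lemma congr_mod_inv x x' : x == x' -> x^-1 == x'^-1.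
Proof.
have [[_ [_ NV]] NJ] := N_normal.
move=> /NV /(NJ _ x); rewrite /congr_mod ginvK ginvM ginvK.
by rewrite -!gmulA gmulV gmulr1.
Qed.

Lemma congr_mod_sym x y : x == y -> y == x.
Proof. by have [[_ [_ NV]] _] := N_normal; move=> /NV; rewrite /congr_mod ginvM ginvK. Qed.

Lemma congr_mod_trans y x z : x == y -> y == z -> x == z.
Proof.
have [[_ [NM _]] _] := N_normal.
by move=> exy eyz; have := NM _ _ exy eyz; rewrite -gmulA (gmulA y^-1) gmulV gmul1.
Qed.

End CongruenceModNormal.

Definition conjg y g := y^-1 * g * y.

Lemma conj1g g : conjg 1 g = g.
Proof. by rewrite /conjg ginv1 gmul1 gmulr1. Qed.

Lemma conjg1 y : conjg y 1 = 1.
Proof. by rewrite /conjg gmulr1 gmulV. Qed.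

Lemma conjgM y g h : conjg y (g * h) = conjg y g * conjg y h.
Proof. by rewrite /conjg !gmulA -(gmulA _ y) gmulVr gmulr1. Qed.

Lemma conjgV y g : conjg y g^-1 = (conjg y g)^-1.
Proof. by rewrite /conjg !ginvM ginvK gmulA. Qed.

Lemma conjgMl y u g : conjg (y * u) g = conjg u (conjg y g).
Proof. by rewrite /conjg ginvM !gmulA. Qed.

Lemma conjg_id y g : y * g = g * y -> conjg y g = g.
Proof. by move=> yg; rewrite /conjg -gmulA -yg gmulA gmulV gmul1. Qed.

Lemma congr_mod_conjg N y y' g g' : is_normal N ->
  congr_mod N y y' -> congr_mod N g g' -> congr_mod N (conjg y g) (conjg y' g').
Proof.
move=> N_normal eyy' egg'.
by do 2![apply: congr_mod_mul => //]; apply: congr_mod_inv.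
Qed.

Lemma congr_mod_conjg_trivial N y g : is_normal N ->
  congr_mod N y 1 \/ congr_mod N g 1 -> congr_mod N (conjg y g) g.
Proof.
move=> N_normal [y1|g1].
  by rewrite -{2}(conj1g g); apply: congr_mod_conjg => //; apply: congr_mod_refl.
apply: (congr_mod_trans N_normal 1); last exact: congr_mod_sym.
by rewrite -(conjg1 y); apply: congr_mod_conjg => //; apply: congr_mod_refl.
Qed.

Section DiagonalImage.
Context {m : nat} (N : 'I_m -> G -> Prop) (N_normal : forall i, is_normal (N i)).

(* [t] lies in the image of [G] in the product of the quotients [G / N i]. *)
Definition in_diag_image (t : 'I_m -> G) :=
  exists g, forall i, congr_mod (N i) (t i) g.

Lemma in_diag_image_ext t u : (forall i, t i = u i) -> in_diag_image t -> in_diag_image u.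
Proof. by move=> etu [g tg]; exists g => i; rewrite -etu. Qed.

Lemma in_diag_image_const g : in_diag_image (fun=> g).
Proof. by exists g => i; apply: congr_mod_refl. Qed.

Lemma in_diag_image_mul t u :
  in_diag_image t -> in_diag_image u -> in_diag_image (fun i => t i * u i).
Proof. by move=> [g tg] [h uh]; exists (g * h) => i; apply: congr_mod_mul. Qed.

Lemma in_diag_image_inv t : in_diag_image t -> in_diag_image (fun i => (t i)^-1).
Proof. by move=> [g tg]; exists g^-1 => i; apply: congr_mod_inv. Qed.

Lemma in_diag_image_congr t u :
  (forall i, congr_mod (N i) (t i) (u i)) -> in_diag_image t -> in_diag_image u.
Proof.
move=> etu [g tg]; exists g => i.
by apply: (congr_mod_trans (N_normal i) (t i)); [apply: congr_mod_sym|].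
Qed.

Definition normalizes_diag_image (y : 'I_m -> G) :=
  forall g, in_diag_image (fun i => conjg (y i) g).

Lemma normalizes_diag_image_gen (X : G -> Prop) (y : 'I_m -> G) :
  (forall g, gen_subgroup X g) ->
  (forall x, X x -> in_diag_image (fun i => conjg (y i) x)) ->
  normalizes_diag_image y.
Proof.
move=> genX Xy g.
apply: (gen_subgroup_ind X (fun g => in_diag_image (fun i => conjg (y i) g))) (genX g) => //.
split; [|split] => [|g' h|g'].
- by apply: in_diag_image_ext (in_diag_image_const 1) => i; rewrite conjg1.
- move=> /in_diag_image_mul yg /yg /in_diag_image_ext; apply=> i.
  by rewrite conjgM.
- by move=> /in_diag_image_inv /in_diag_image_ext; apply=> i; rewrite conjgV.
Qed.

Lemma normalizes_diag_image1 : normalizes_diag_image (fun=> 1).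
Proof. by move=> g; apply: in_diag_image_ext (in_diag_image_const g) => i; rewrite conj1g. Qed.

Lemma normalizes_diag_imageM (y u : 'I_m -> G) :
  normalizes_diag_image y -> normalizes_diag_image u ->
  normalizes_diag_image (fun i => y i * u i).
Proof.
move=> ny nu g; have [g' yg'] := ny g.
apply: in_diag_image_congr (nu g') => i.
by rewrite conjgMl; apply: congr_mod_sym => //; apply: congr_mod_conjg (congr_mod_refl _ _) _.
Qed.

End DiagonalImage.

Definition single_at {m : nat} (i : 'I_m) x : 'I_m -> G :=
  fun r => if r == i then x else 1.

Lemma single_at1 m (i : 'I_m) : single_at i 1 = fun=> 1.
Proof. by apply: functional_extensionality => r; rewrite /single_at; case: ifP. Qed.

Lemma single_atM m (i : 'I_m) x y :
  single_at i (x * y) = fun r => single_at i x r * single_at i y r.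
Proof.
by apply: functional_extensionality => r; rewrite /single_at; case: ifP; rewrite ?gmul1.
Qed.

Lemma tuple_single_at_ind m (P : ('I_m -> G) -> Prop) :
  P (fun=> 1) -> (forall t u, P t -> P u -> P (fun r => t r * u r)) ->
  (forall i x, P (single_at i x)) -> forall t, P t.
Proof.
move=> P1 PM Psingle t.
pose trunc k (r : 'I_m) := if r < k then t r else 1.
suff Ptrunc k : P (trunc k).
  by have := Ptrunc m; congr P; apply: functional_extensionality => r; rewrite /trunc ltn_ord.
elim: k => [//|k IHk]; case: (ltnP k m) => [km|mk].
- have -> : trunc k.+1 = fun r => trunc k r * single_at (Ordinal km) (t (Ordinal km)) r.
    apply: functional_extensionality => r; rewrite /trunc /single_at ltnS leq_eqVlt.
    have [-> /=|ri] := eqVneq r (Ordinal km); first by rewrite eqxx ltnn gmul1.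
    have -> /= : (nat_of_ord r == k) = false.
      by apply: contra_neqF ri => /eqP rk; apply: val_inj.
    by rewrite gmulr1.
  exact: PM.
- have -> // : trunc k.+1 = trunc k.
  apply: functional_extensionality => r; rewrite /trunc.
  by rewrite (leq_trans (ltn_ord r) mk) (leq_trans (ltn_ord r) (leqW mk)).
Qed.

End GroupFacts.

Section QuotientsByIndexSets.
Variables (G : grp) (n m : nat) (a : 'I_n -> G) (S : 'I_m -> {set 'I_n}).
Hypothesis a_gen : forall g : G, gen_subgroup (fun x => exists j, x = a j) g.
Hypothesis z_central : forall g : G, gmul (prodl a) g = gmul g (prodl a).
Hypothesis S_meet : forall i r, i != r -> #|S i :&: S r| <= 1.
Local Notation "x * y" := (gmul x y).
Local Notation "x ^-1" := (ginv x).
Local Notation "1" := (@gone G).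
Local Notation N i := (kerSbar a (S i)).
Local Notation Nbar := (fun i => kerSbar a (S i)).

Lemma kerSbar_normal (T : {set 'I_n}) : is_normal (kerSbar a T).
Proof.
apply: normal_mul_central; [exact: normal_closure_normal|exact: gen_subgroup_is_subgroup|].
by apply: gen_subgroup_ind; [exact: central_is_subgroup|move=> x ->].
Qed.

Let N_normal i : is_normal (N i) := kerSbar_normal (S i).

Lemma kerSbar_gen (T : {set 'I_n}) j : j \notin T -> congr_mod (kerSbar a T) (a j) 1.
Proof.
move=> jT; exists 1; split; first by case: (gen_subgroup_is_subgroup (fun x : G => x = prodl a)).
by rewrite ginv1 !gmulr1 => P _; apply; exists j.
Qed.

Lemma meet_uniq i r j k :
  i != r -> j \in S i -> k \in S i -> j \in S r -> k \in S r -> j = k.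
Proof.
move=> ir ji ki jr kr.
move/card_le1_eqP: (S_meet _ _ ir) => eq_meet.
by apply: eq_meet; rewrite inE ?ji ?ki ?jr ?kr.
Qed.

Lemma normalizes_single_at_gen i j y :
  (forall r, j \notin S r -> congr_mod (N r) y 1) -> y * a j = a j * y ->
  normalizes_diag_image Nbar (single_at i y).
Proof.
move=> y_triv y_comm; apply: (normalizes_diag_image_gen _ N_normal _ _ a_gen) => _ [k ->].
have conj_single r : conjg (single_at i y r) (a k) = if r == i then conjg y (a k) else a k.
  by rewrite /single_at; case: ifP; rewrite ?conj1g.
have conj_triv r : j \notin S r \/ k \notin S r -> congr_mod (N r) (conjg y (a k)) (a k).
  move=> jkr; apply: congr_mod_conjg_trivial; first exact: N_normal.
  by case: jkr => [/y_triv|/kerSbar_gen]; [left|right].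
have [/and3P [ji ki jk]|moved] := boolP [&& j \in S i, k \in S i & j != k].
- exists (conjg y (a k)) => r; rewrite conj_single.
  have [_|ri] := eqVneq r i; first exact: congr_mod_refl.
  apply: congr_mod_sym; first exact: N_normal.
  apply: conj_triv; apply/nandP; apply: contra jk => /andP [jr kr].
  by apply/eqP; apply: (meet_uniq i r); rewrite // eq_sym.
- exists (a k) => r; rewrite conj_single.
  have [->|_] := eqVneq r i; last exact: congr_mod_refl.
  have [ji|] := boolP (j \in S i); last by move=> jN; apply: conj_triv; left.
  have [ki|] := boolP (k \in S i); last by move=> kN; apply: conj_triv; right.
  move: moved; rewrite ji ki /= negbK => /eqP <-.
  by rewrite conjg_id //; exact: congr_mod_refl.
Qed.

Lemma normalizes_diag_image_all h : normalizes_diag_image Nbar h.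
Proof.
apply: tuple_single_at_ind h => [|t u|i x]; first exact: normalizes_diag_image1.
  exact: normalizes_diag_imageM.
apply: (gen_subgroup_monoid_ind _ (fun x => normalizes_diag_image Nbar (single_at i x)))
         (a_gen x) => [|y y'|_ [j ->]].
- by rewrite single_at1; apply: normalizes_diag_image1.
- by rewrite single_atM; apply: normalizes_diag_imageM.
- split; apply: (normalizes_single_at_gen i j) => //.
  + by move=> r /kerSbar_gen.
  + by move=> r /kerSbar_gen /(congr_mod_inv (N_normal r)); rewrite ginv1.
  + by rewrite gmulV gmulVr.
Qed.

End QuotientsByIndexSets.

Theorem mainTheorem12 (G : grp) (n m : nat) (a : 'I_n -> G)
  (S : 'I_m -> {set 'I_n})
  (Hgen : forall g : G, gen_subgroup (fun x => exists j, x = a j) g)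
  (Hz : forall g : G, gmul (prodl a) g = gmul g (prodl a))
  (HS : forall i r, i != r -> #|S i :&: S r| <= 1)
  (Hrank : forall i, exists b : 'I_(#|S i| - 1) -> G,
             free_basis_mod (kerSbar a (S i)) b)
  (Hbasis : forall i k, k \in S i ->
     free_basis_mod (kerSbar a (S i))
       (fun j : {j : 'I_n | j \in S i :\ k} => a (val j))) :
  forall (h : 'I_m -> G) (g : G), exists g' : G,
    forall i, kerSbar a (S i)
      (gmul (gmul (gmul (ginv (h i)) g) (h i)) (ginv g')).
Proof.
by move=> h; apply: (@normalizes_diag_image_all G n m a S Hgen Hz HS).
Qed.
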